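(* For all $b\in(0,\pi/2)$, $\pi^2\frac{I_1(b)}{I_2(b)^3}<2$, where $I_1(b)=\int_{-b}^{b}\frac{\cos^5\varphi}{\sqrt{\cos^4\varphi-\cos^4b}}\,d\varphi$ and $I_2(b)=\int_{-b}^{b}\frac{\cos^3\varphi}{\sqrt{\cos^4\varphi-\cos^4b}}\,d\varphi$. *)

From Stdlib Require Import Reals.
Open Scope R_scope.

Definition improper_integral (f : R -> R) (a b l : R) : Prop :=
  forall eps : R, 0 < eps ->
    exists delta : R, 0 < delta /\
      forall c d : R, a < c < a + delta -> b - delta < d < b -> c < d ->
        exists pr : Riemann_integrable f c d, Rabs (RiemannInt pr - l) < eps.

Definition integrand1 (b : R) (phi : R) : R :=
  cos phi ^ 5 / sqrt (cos phi ^ 4 - cos b ^ 4).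
Definition integrand2 (b : R) (phi : R) : R :=
  cos phi ^ 3 / sqrt (cos phi ^ 4 - cos b ^ 4).

From Stdlib Require Import Reals Lra Lia List.
From Coquelicot Require Import Coquelicot.
Import ListNotations.
Open Scope R_scope.

(** Let 0 < b < pi/2 and a = cos^2 b, so 0 < a < 1.  The substitution
    sin phi = sin b * sin theta (theta in (-pi/2, pi/2)) satisfies, with
    y = cos^2 theta,
      cos^2 phi = g(y) := a + (1-a) y,   cos^2 phi + cos^2 b = z(y) := 2a + (1-a) y,
    and it turns each singular integral
      I_(2k+1) = int_{-b}^{b} cos^(2k+1) phi / sqrt (cos^4 phi - cos^4 b) dphi
    into the regular integral of g(y)^k / sqrt (z(y)) over [-pi/2, pi/2]; this is
    justified by an improper fundamental theorem of calculus.  Then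
    - the integrand g^2/sqrt z of I_1 is bounded above by a polynomial in y,
      using AM-GM against the constant sqrt 2 * (3+2a)/5 and a chord bound for
      the convex function a^2/z;
    - the integrand g/sqrt z of I_2 is bounded below by a polynomial in y,
      using 1/q >= r (3 - q^2 r^2)/2 with r a linear approximation of 1/sqrt z.
    Polynomials in cos^2 theta integrate exactly by Wallis' formulas, so the
    theorem reduces to a polynomial inequality in a, which is certified by a
    Bernstein expansion with positive coefficients. *)

Lemma continuous_of_ex_derive (f : R -> R) x : ex_derive f x -> continuous f x.
Proof. apply (ex_derive_continuous (K := R_AbsRing) (V := R_NormedModule)). Qed.

(** Extensionality of [is_RInt] for real functions, with the pointwise
    equality stated in [R] so that [field] applies to it. *)
Lemma is_RInt_ext_R (g f : R -> R) (u v l : R) :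
  (forall x, f x = g x) -> is_RInt g u v l -> is_RInt f u v l.
Proof. intros Hfg. apply is_RInt_ext. intros x _. symmetry. apply Hfg. Qed.

Lemma continuous_eps (f : R -> R) x : continuous f x ->
  forall eps, 0 < eps ->
  exists d, 0 < d /\ forall y, Rabs (y - x) < d -> Rabs (f y - f x) < eps.
Proof.
  intros Hc eps Heps.
  apply continuity_pt_filterlim in Hc.
  destruct (proj1 (continuity_pt_locally f x) Hc (mkposreal eps Heps)) as [d Hd].
  exists d; split; [apply cond_pos | exact Hd].
Qed.

Lemma continuous_comp_limit (P g : R -> R) (L : R) (U : R -> R -> Prop) :
  continuous P L ->
  (forall eta, 0 < eta -> exists d, 0 < d /\ forall x, U d x -> Rabs (g x - L) < eta) ->
  forall eps, 0 < eps -> exists d, 0 < d /\ forall x, U d x -> Rabs (P (g x) - P L) < eps.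
Proof.
  intros HP Hg eps Heps.
  destruct (continuous_eps P L HP eps Heps) as [eta [Heta HPeta]].
  destruct (Hg eta Heta) as [d [Hd Hgd]].
  exists d; split; [exact Hd |]. intros x Hx. apply HPeta, Hgd, Hx.
Qed.

Lemma improper_integral_antiderivative (f F : R -> R) (a0 b0 La Lb : R) :
  a0 < b0 ->
  (forall x, a0 < x < b0 -> is_derive F x (f x)) ->
  (forall x, a0 < x < b0 -> continuous f x) ->
  (forall eps, 0 < eps -> exists d, 0 < d /\
     forall x, a0 < x < a0 + d -> Rabs (F x - La) < eps) ->
  (forall eps, 0 < eps -> exists d, 0 < d /\
     forall x, b0 - d < x < b0 -> Rabs (F x - Lb) < eps) ->
  improper_integral f a0 b0 (Lb - La).
Proof.
  intros Hab Hder Hcont HA HB eps Heps.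
  destruct (HA (eps / 2) ltac:(lra)) as [dA [HdA HFa]].
  destruct (HB (eps / 2) ltac:(lra)) as [dB [HdB HFb]].
  exists (Rmin dA dB); split; [apply Rmin_glb_lt; lra |].
  intros c d Hc Hd Hcd.
  pose proof (Rmin_l dA dB); pose proof (Rmin_r dA dB).
  assert (HI : is_RInt f c d (minus (F d) (F c))).
  { apply (is_RInt_derive (V := R_CompleteNormedModule) F f);
      intros x Hx; rewrite Rmin_left, Rmax_right in Hx by lra;
      [apply Hder | apply Hcont]; lra. }
  assert (pr : Riemann_integrable f c d) by (apply ex_RInt_Reals_0; eexists; exact HI).
  exists pr. rewrite <- RInt_Reals, (is_RInt_unique _ _ _ _ HI).
  specialize (HFa c ltac:(lra)). specialize (HFb d ltac:(lra)).
  unfold minus, plus, opp; simpl.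
  replace (F d + - F c - (Lb - La)) with ((F d - Lb) - (F c - La)) by ring.
  eapply Rle_lt_trans; [apply Rabs_triang |]. rewrite Rabs_Ropp. lra.
Qed.

Lemma asin_near_one (eta : R) : 0 < eta ->
  exists d, 0 < d /\ forall u, 1 - d < u <= 1 -> PI / 2 - eta < asin u.
Proof.
  intros Heta. pose proof PI_RGT_0.
  set (x0 := PI / 2 - Rmin eta (PI / 2) / 2).
  assert (Hmin : 0 < Rmin eta (PI / 2) <= PI / 2).
  { split; [apply Rmin_glb_lt; lra | apply Rmin_r]. }
  pose proof (Rmin_l eta (PI / 2)).
  assert (Hsin : 0 < sin x0 < 1).
  { split; [apply sin_gt_0; unfold x0; lra |].
    rewrite <- sin_PI2. apply sin_increasing_1; unfold x0; lra. }
  exists (1 - sin x0); split; [lra |].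
  intros u Hu.
  destruct (Rle_or_lt (asin u) x0) as [Hle | Hlt]; [| unfold x0 in Hlt; lra].
  pose proof (asin_bound u).
  assert (sin (asin u) <= sin x0).
  { destruct (Req_dec (asin u) x0) as [E | E]; [rewrite E; lra |].
    apply Rlt_le, sin_increasing_1; unfold x0 in *; lra. }
  rewrite sin_asin in H2 by lra. lra.
Qed.

(** * Wallis' integrals and polynomials in cos^2 *)

(** [wallis k = (2k-1)!! / (2k)!!]. *)
Fixpoint wallis (k : nat) : R :=
  match k with
  | O => 1
  | S k' => wallis k' * (2 * INR k' + 1) / (2 * INR k' + 2)
  end.

(** [int_{-pi/2}^{pi/2} cos^(2k) = pi * wallis k]; the recursion comes from
    differentiating [cos^(2k+1) * sin], which vanishes at both ends. *)
Lemma is_RInt_cos2_pow (k : nat) :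
  is_RInt (fun x => (cos x ^ 2) ^ k) (-(PI / 2)) (PI / 2) (PI * wallis k).
Proof.
  induction k as [| k IH].
  - replace (PI * wallis 0) with (scal (PI / 2 - - (PI / 2)) 1)
      by (unfold scal; simpl; unfold mult; simpl; field).
    exact (is_RInt_const (V := R_CompleteNormedModule) _ _ 1).
  - set (D := fun x => cos x ^ (2 * k + 1) * sin x).
    set (D' := fun x => (2 * INR k + 2) * (cos x ^ 2) ^ S k - (2 * INR k + 1) * (cos x ^ 2) ^ k).
    assert (HD : is_RInt D' (-(PI / 2)) (PI / 2) 0).
    { replace 0 with (minus (D (PI / 2)) (D (-(PI / 2)))).
      2: { unfold D, minus, plus, opp; simpl.
           rewrite cos_neg, cos_PI2, pow_i by lia. ring. }
      apply (is_RInt_derive (V := R_CompleteNormedModule) D D').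
      - intros x _. unfold D, D'. auto_derive; [easy |].
        replace (k + (k + 0) + 1)%nat with (S (2 * k)) by lia.
        cbn [Init.Nat.pred]. rewrite S_INR, mult_INR. simpl INR.
        rewrite <- !pow_mult. replace (2 * S k)%nat with (S (S (2 * k))) by lia.
        assert (Hs : sin x * sin x = 1 - cos x * cos x)
          by (pose proof (sin2_cos2 x); unfold Rsqr in *; lra).
        cbn [pow]. set (p := cos x ^ (2 * k)).
        apply Rminus_diag_uniq.
        transitivity ((- ((1 + 1) * INR k + 1) * p) * (sin x * sin x - (1 - cos x * cos x)));
          [ring | rewrite Hs; ring].
      - intros x _. apply continuous_of_ex_derive. unfold D'. auto_derive. easy. }
    assert (Hk : 0 < 2 * INR k + 2) by (pose proof (pos_INR k); lra).
    assert (H := is_RInt_scal _ _ _ (/ (2 * INR k + 2)) _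
                   (is_RInt_plus _ _ _ _ _ _ HD (is_RInt_scal _ _ _ (2 * INR k + 1) _ IH))).
    eapply is_RInt_ext; [| replace (PI * wallis (S k)) with
      (scal (/ (2 * INR k + 2)) (plus 0 (scal (2 * INR k + 1) (PI * wallis k)))); [exact H |]].
    + intros x _. unfold D', scal, plus; simpl; unfold mult; simpl. field. lra.
    + unfold scal, plus; simpl; unfold mult; simpl. field. lra.
Qed.

Fixpoint poly_eval (l : list R) (k : nat) (y : R) : R :=
  match l with nil => 0 | c :: l' => c * y ^ k + poly_eval l' (S k) y end.
Fixpoint poly_moment (l : list R) (k : nat) : R :=
  match l with nil => 0 | c :: l' => c * wallis k + poly_moment l' (S k) end.

Lemma is_RInt_poly_cos2 (l : list R) (k : nat) :
  is_RInt (fun x => poly_eval l k (cos x ^ 2)) (-(PI / 2)) (PI / 2) (PI * poly_moment l k).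
Proof.
  revert k; induction l as [| c l IH]; intros k; simpl.
  - replace (PI * 0) with (scal (PI / 2 - - (PI / 2)) 0)
      by (unfold scal; simpl; unfold mult; simpl; ring).
    exact (is_RInt_const (V := R_CompleteNormedModule) _ _ 0).
  - replace (PI * (c * wallis k + poly_moment l (S k)))
      with (plus (scal c (PI * wallis k)) (PI * poly_moment l (S k)))
      by (unfold scal, plus; simpl; unfold mult; simpl; ring).
    exact (is_RInt_plus _ _ _ _ _ _ (is_RInt_scal _ _ _ c _ (is_RInt_cos2_pow k)) (IH (S k))).
Qed.

(** * The substitution sin phi = sin b * sin theta *)

(** With [y = cos^2 theta]: [gsub a y] is [cos^2 phi] and [zsub a y] is
    [cos^2 phi + a], where [a = cos^2 b]. *)
Definition gsub (a y : R) : R := a + (1 - a) * y.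
Definition zsub (a y : R) : R := 2 * a + (1 - a) * y.

(** The transformed integrand of [I_(2k+1)], smooth on the whole line. *)
Definition reduced (a : R) (k : nat) (x : R) : R :=
  gsub a (cos x ^ 2) ^ k / sqrt (zsub a (cos x ^ 2)).

Definition reduced_prim (a : R) (k : nat) (x : R) : R :=
  RInt (reduced a k) (-(PI / 2)) x.

Lemma cos2_bounds (x : R) : 0 <= cos x ^ 2 <= 1.
Proof.
  pose proof (sin2_cos2 x). unfold Rsqr in H.
  split; [apply pow2_ge_0 | simpl; nra].
Qed.

Lemma zsub_pos (a y : R) : 0 < a < 1 -> 0 <= y -> 0 < zsub a y.
Proof. intros; unfold zsub; nra. Qed.

Lemma reduced_ex_derive (a : R) (k : nat) (x : R) : 0 < a < 1 -> ex_derive (reduced a k) x.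
Proof.
  intros Ha. pose proof (zsub_pos a (cos x ^ 2) Ha (proj1 (cos2_bounds x))) as Hz.
  unfold reduced, gsub, zsub in *.
  auto_derive. split; [lra |]. split; [| easy]. apply Rgt_not_eq, sqrt_lt_R0; lra.
Qed.

Lemma reduced_ex_RInt (a : R) (k : nat) (u v : R) : 0 < a < 1 -> ex_RInt (reduced a k) u v.
Proof.
  intros Ha. apply (ex_RInt_continuous (V := R_CompleteNormedModule)).
  intros; apply continuous_of_ex_derive, reduced_ex_derive, Ha.
Qed.

Lemma reduced_prim_derive (a : R) (k : nat) (x : R) :
  0 < a < 1 -> is_derive (reduced_prim a k) x (reduced a k x).
Proof.
  intros Ha.
  apply (is_derive_RInt (V := R_CompleteNormedModule) (reduced a k) _ (-(PI / 2)) x).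
  - apply filter_forall. intros y. apply RInt_correct, reduced_ex_RInt, Ha.
  - apply continuous_of_ex_derive, reduced_ex_derive, Ha.
Qed.

Section Substitution.

Variable b : R.
Hypothesis hb : 0 < b < PI / 2.

Definition theta (phi : R) : R := asin (sin phi / sin b).

Lemma sin_b_pos : 0 < sin b.
Proof. apply sin_gt_0; lra. Qed.

Lemma cos2_b_range : 0 < cos b ^ 2 < 1.
Proof.
  pose proof sin_b_pos. assert (0 < cos b) by (apply cos_gt_0; lra).
  pose proof (sin2_cos2 b). unfold Rsqr in *. simpl. nra.
Qed.

Lemma cos_gt_cos_b (phi : R) : -b < phi < b -> cos b < cos phi.
Proof.
  intros Hphi. pose proof PI_RGT_0.
  destruct (Rle_or_lt 0 phi).
  - apply cos_decreasing_1; lra.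
  - rewrite <- (cos_neg phi). apply cos_decreasing_1; lra.
Qed.

Lemma cos_sq_gap (phi : R) : -b < phi < b -> 0 < cos phi ^ 2 - cos b ^ 2.
Proof.
  intros Hphi. pose proof (cos_gt_cos_b phi Hphi).
  assert (0 < cos b) by (apply cos_gt_0; lra). simpl; nra.
Qed.

Lemma one_minus_sin_ratio_sq (phi : R) :
  1 - (sin phi / sin b)² = (cos phi ^ 2 - cos b ^ 2) / sin b ^ 2.
Proof.
  pose proof sin_b_pos. pose proof (sin2_cos2 phi). pose proof (sin2_cos2 b).
  unfold Rsqr in *. field_simplify_eq; [| lra].
  replace (cos phi ^ 2) with (1 - sin phi * sin phi) by (simpl; lra).
  replace (cos b ^ 2) with (1 - sin b * sin b) by (simpl; lra). ring.
Qed.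

Lemma sin_ratio_range (phi : R) : -b < phi < b -> -1 < sin phi / sin b < 1.
Proof.
  intros Hphi.
  pose proof sin_b_pos. pose proof (cos_gt_cos_b phi Hphi).
  assert (0 < cos b) by (apply cos_gt_0; lra).
  assert (Hsq : 0 < 1 - (sin phi / sin b)²).
  { rewrite one_minus_sin_ratio_sq. apply Rdiv_lt_0_compat; simpl; nra. }
  unfold Rsqr in Hsq. set (u := sin phi / sin b) in *. clearbody u.
  split; destruct (Rle_or_lt u 0); nra.
Qed.

Lemma cos_theta_sq (phi : R) : -b < phi < b ->
  cos (theta phi) ^ 2 = (cos phi ^ 2 - cos b ^ 2) / sin b ^ 2.
Proof.
  intros Hphi. pose proof (sin_ratio_range phi Hphi).
  unfold theta. rewrite cos_asin by lra.
  rewrite <- one_minus_sin_ratio_sq. simpl. rewrite Rmult_1_r, sqrt_sqrt; [easy |].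
  rewrite one_minus_sin_ratio_sq. pose proof sin_b_pos.
  apply Rlt_le, Rdiv_lt_0_compat; [exact (cos_sq_gap phi Hphi) | apply pow_lt; lra].
Qed.

Lemma gsub_theta (phi : R) : -b < phi < b ->
  gsub (cos b ^ 2) (cos (theta phi) ^ 2) = cos phi ^ 2.
Proof.
  intros Hphi. rewrite cos_theta_sq by exact Hphi. pose proof sin_b_pos.
  pose proof (sin2_cos2 b). unfold gsub, Rsqr in *.
  replace (1 - cos b ^ 2) with (sin b ^ 2) by (simpl; lra). field. lra.
Qed.

Lemma zsub_theta (phi : R) : -b < phi < b ->
  zsub (cos b ^ 2) (cos (theta phi) ^ 2) = cos b ^ 2 + cos phi ^ 2.
Proof.
  intros Hphi. pose proof (gsub_theta phi Hphi). unfold gsub, zsub in *. lra.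
Qed.

Lemma theta_derive (phi : R) : -b < phi < b ->
  is_derive theta phi (cos phi / sqrt (cos phi ^ 2 - cos b ^ 2)).
Proof.
  intros Hphi.
  pose proof sin_b_pos as HS. pose proof (sin_ratio_range phi Hphi) as Hu.
  pose proof (cos_sq_gap phi Hphi) as Hd.
  assert (Hroot : sqrt (1 - (sin phi / sin b)²) = sqrt (cos phi ^ 2 - cos b ^ 2) / sin b).
  { rewrite one_minus_sin_ratio_sq, sqrt_div_alt by (apply pow_lt; lra).
    rewrite sqrt_pow2 by lra. reflexivity. }
  assert (Hpos : 0 < sqrt (cos phi ^ 2 - cos b ^ 2)) by (apply sqrt_lt_R0; lra).
  replace (cos phi / sqrt (cos phi ^ 2 - cos b ^ 2))
    with (cos phi / sin b * (1 / sqrt (1 - (sin phi / sin b)²)))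
    by (rewrite Hroot; field; lra).
  apply (is_derive_comp asin (fun x => sin x / sin b) phi).
  - apply is_derive_Reals, (derive_pt_eq_1 _ _ _ (derivable_pt_asin _ Hu)).
    apply derive_pt_asin.
  - auto_derive; [lra |]. field. lra.
Qed.

Lemma theta_odd (phi : R) : theta (- phi) = - theta phi.
Proof.
  pose proof sin_b_pos. unfold theta.
  rewrite sin_neg, <- asin_opp. f_equal. field. lra.
Qed.

Lemma theta_tends_right (eta : R) : 0 < eta ->
  exists d, 0 < d /\ forall phi, b - d < phi < b -> Rabs (theta phi - PI / 2) < eta.
Proof.
  intros Heta. pose proof sin_b_pos.
  destruct (asin_near_one eta Heta) as [du [Hdu Hasin]].
  assert (Hsin : continuous sin b)
    by (apply continuous_of_ex_derive; auto_derive; easy).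
  destruct (continuous_eps sin b Hsin (du * sin b) ltac:(nra)) as [d [Hd Hclose]].
  exists (Rmin d (2 * b)); split; [apply Rmin_glb_lt; lra |].
  intros phi Hphi. pose proof (Rmin_l d (2 * b)). pose proof (Rmin_r d (2 * b)).
  pose proof (sin_ratio_range phi ltac:(lra)).
  specialize (Hclose phi ltac:(rewrite Rabs_left; lra)).
  assert (1 - du < sin phi / sin b).
  { apply Rabs_def2 in Hclose. apply (Rmult_lt_reg_r (sin b)); [lra |].
    field_simplify; lra. }
  specialize (Hasin (sin phi / sin b) ltac:(lra)).
  pose proof (asin_bound (sin phi / sin b)).
  unfold theta. rewrite Rabs_left1; lra.
Qed.

Lemma reduced_prim_theta_derive (k : nat) (phi : R) : -b < phi < b ->
  is_derive (fun x => reduced_prim (cos b ^ 2) k (theta x)) phi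
    (cos phi ^ (2 * k + 1) / sqrt (cos phi ^ 4 - cos b ^ 4)).
Proof.
  intros Hphi. pose proof cos2_b_range as Ha. pose proof (cos_sq_gap phi Hphi) as Hd.
  assert (Hsplit : sqrt (cos phi ^ 4 - cos b ^ 4)
                   = sqrt (cos phi ^ 2 - cos b ^ 2) * sqrt (cos b ^ 2 + cos phi ^ 2)).
  { rewrite <- sqrt_mult by lra. f_equal. ring. }
  assert (0 < sqrt (cos phi ^ 2 - cos b ^ 2)) by (apply sqrt_lt_R0; lra).
  assert (0 < sqrt (cos b ^ 2 + cos phi ^ 2)) by (apply sqrt_lt_R0; lra).
  replace (cos phi ^ (2 * k + 1) / sqrt (cos phi ^ 4 - cos b ^ 4))
    with (cos phi / sqrt (cos phi ^ 2 - cos b ^ 2) * reduced (cos b ^ 2) k (theta phi)).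
  - exact (is_derive_comp _ _ phi _ _ (reduced_prim_derive _ k _ Ha) (theta_derive phi Hphi)).
  - unfold reduced. rewrite gsub_theta, zsub_theta, Hsplit, pow_add, pow_mult by exact Hphi.
    field. lra.
Qed.

Lemma improper_integral_odd_power (k : nat) :
  improper_integral (fun phi => cos phi ^ (2 * k + 1) / sqrt (cos phi ^ 4 - cos b ^ 4))
    (- b) b (RInt (reduced (cos b ^ 2) k) (-(PI / 2)) (PI / 2)).
Proof.
  pose proof cos2_b_range as Ha.
  set (P := reduced_prim (cos b ^ 2) k).
  assert (HP : forall x, continuous P x)
    by (intros x; apply continuous_of_ex_derive; eexists; apply reduced_prim_derive, Ha).
  replace (RInt (reduced (cos b ^ 2) k) (-(PI / 2)) (PI / 2)) with (P (PI / 2) - P (-(PI / 2)))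
    by (unfold P, reduced_prim; rewrite RInt_point; apply Rminus_0_r).
  apply (improper_integral_antiderivative _ (fun x => P (theta x))); [lra | | | |].
  - apply reduced_prim_theta_derive.
  - intros x Hx. apply continuous_of_ex_derive.
    pose proof (cos_sq_gap x Hx). pose proof cos2_b_range.
    assert (0 < cos x ^ 4 - cos b ^ 4).
    { replace (cos x ^ 4 - cos b ^ 4)
        with ((cos x ^ 2 - cos b ^ 2) * (cos x ^ 2 + cos b ^ 2)) by ring. nra. }
    auto_derive. split; [lra |]. split; [| easy]. apply Rgt_not_eq, sqrt_lt_R0; lra.
  - apply (continuous_comp_limit P theta (-(PI / 2)) (fun d x => - b < x < - b + d)
             (HP _)).
    intros eta Heta. destruct (theta_tends_right eta Heta) as [d [Hd Hth]].
    exists d; split; [exact Hd |]. intros x Hx.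
    rewrite <- (Ropp_involutive x), theta_odd.
    replace (- theta (- x) - - (PI / 2)) with (- (theta (- x) - PI / 2)) by ring.
    rewrite Rabs_Ropp. apply Hth. lra.
  - exact (continuous_comp_limit P theta (PI / 2) (fun d x => b - d < x < b)
             (HP _) theta_tends_right).
Qed.

End Substitution.

(** * Polynomial bounds for the transformed integrands *)

(** AM-GM: [1/q <= (1 + nu^2/q^2) / (2 nu)]; here it is combined with an
    upper bound [X] for [G / q^2]. *)
Lemma amgm_div_bound (G q nu X : R) :
  0 < q -> 0 < nu -> 0 <= G -> G <= q ^ 2 * X ->
  G / q <= (G + nu ^ 2 * X) / (2 * nu).
Proof.
  intros Hq Hnu HG HX.
  assert (Hamgm : G / q <= (G + nu ^ 2 * (G / q ^ 2)) / (2 * nu)).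
  { apply Rminus_le_0.
    replace ((G + nu ^ 2 * (G / q ^ 2)) / (2 * nu) - G / q)
      with (G * (q - nu) ^ 2 / (2 * nu * q ^ 2)) by (field; lra).
    apply Rdiv_le_0_compat; [apply Rmult_le_pos; [lra | apply pow2_ge_0] |].
    apply Rmult_lt_0_compat; [lra | apply pow_lt; lra]. }
  assert (G / q ^ 2 <= X).
  { apply (Rmult_le_reg_l (q ^ 2)); [apply pow_lt; lra |].
    field_simplify; lra. }
  assert (nu ^ 2 * (G / q ^ 2) <= nu ^ 2 * X)
    by (apply Rmult_le_compat_l; [apply pow2_ge_0 | lra]).
  eapply Rle_trans; [exact Hamgm |].
  apply Rmult_le_compat_r; [apply Rlt_le, Rinv_0_lt_compat |]; lra.
Qed.

(** Tangent-type lower bound [r (3 - q^2 r^2) / 2 <= 1/q] for [r >= 0]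
    (one Newton step for [1/sqrt]), from [(r q - 1)^2 (r q + 2) >= 0]. *)
Lemma tangent_div_bound (G q r : R) :
  0 < q -> 0 <= r -> 0 <= G -> G * r * (3 - q ^ 2 * r ^ 2) / 2 <= G / q.
Proof.
  intros Hq Hr HG. apply Rminus_le_0.
  replace (G / q - G * r * (3 - q ^ 2 * r ^ 2) / 2)
    with (G * (r * q - 1) ^ 2 * (r * q + 2) / (2 * q)) by (field; lra).
  apply Rdiv_le_0_compat; [| lra].
  apply Rmult_le_pos; [apply Rmult_le_pos; [lra | apply pow2_ge_0] | nra].
Qed.

(** [a^2 / z(y)] is convex in [y], so it lies below its chord on [0, 1]. *)
Lemma chord_bound (a y : R) : 0 < a < 1 -> 0 <= y <= 1 ->
  a ^ 2 <= zsub a y * (a * (1 - y) / 2 + a ^ 2 * y / (1 + a)).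
Proof.
  intros Ha Hy. unfold zsub.
  replace ((2 * a + (1 - a) * y) * (a * (1 - y) / 2 + a ^ 2 * y / (1 + a))) with
    (a ^ 2 * ((1 - y) ^ 2 + y ^ 2 + y * (1 - y) * ((1 + a) / (2 * a) + (2 * a) / (1 + a))))
    by (field; lra).
  assert (Hsum : 2 <= (1 + a) / (2 * a) + (2 * a) / (1 + a)).
  { apply Rminus_le_0.
    replace ((1 + a) / (2 * a) + (2 * a) / (1 + a) - 2)
      with ((1 - a) ^ 2 / ((2 * a) * (1 + a))) by (field; lra).
    apply Rdiv_le_0_compat; [apply pow2_ge_0 | nra]. }
  assert (0 <= y * (1 - y)) by nra.
  assert (y * (1 - y) * 2 <= y * (1 - y) * ((1 + a) / (2 * a) + (2 * a) / (1 + a)))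
    by (apply Rmult_le_compat_l; lra).
  rewrite <- (Rmult_1_r (a ^ 2)) at 1.
  apply Rmult_le_compat_l; [apply pow2_ge_0 | nra].
Qed.

(** The chord majorant of [g^2 / z = (1-a) y + a^2 / z]. *)
Definition chord (a y : R) : R := (1 - a) * y + a * (1 - y) / 2 + a ^ 2 * y / (1 + a).

Lemma gsub_sq_le (a y : R) : 0 < a < 1 -> 0 <= y <= 1 ->
  gsub a y ^ 2 <= zsub a y * chord a y.
Proof.
  intros Ha Hy. pose proof (chord_bound a y Ha Hy).
  replace (gsub a y ^ 2) with ((1 - a) * y * zsub a y + a ^ 2)
    by (unfold gsub, zsub; ring).
  unfold chord. lra.
Qed.

(** [sqrt 2 * nu a] approximates [sqrt (z y)], and [(alpha a - beta a * y) / sqrt 2]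
    approximates [1 / sqrt (z y)]. *)
Definition nu (a : R) : R := (3 + 2 * a) / 5.
Definition alpha (a : R) : R := 1 + 2 * (1 - a) ^ 2.
Definition beta (a : R) : R := 8 / 5 * (1 - a) ^ 2.

Definition upper_poly (a y : R) : R :=
  (gsub a y ^ 2 + 2 * nu a ^ 2 * chord a y) / (2 * sqrt 2 * nu a).
Definition lower_poly (a y : R) : R :=
  gsub a y * (alpha a - beta a * y) * (3 - zsub a y * (alpha a - beta a * y) ^ 2 / 2)
  / (2 * sqrt 2).

Lemma upper_poly_bound (a y : R) : 0 < a < 1 -> 0 <= y <= 1 ->
  gsub a y ^ 2 / sqrt (zsub a y) <= upper_poly a y.
Proof.
  intros Ha Hy.
  pose proof (zsub_pos a y Ha (proj1 Hy)) as Hz.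
  assert (Hs : 0 < sqrt 2) by (apply sqrt_lt_R0; lra).
  assert (Hnu : 0 < nu a) by (unfold nu; lra).
  replace (upper_poly a y) with
    ((gsub a y ^ 2 + (sqrt 2 * nu a) ^ 2 * chord a y) / (2 * (sqrt 2 * nu a))).
  2: { unfold upper_poly. rewrite Rpow_mult_distr, pow2_sqrt by lra. field. lra. }
  apply amgm_div_bound; [apply sqrt_lt_R0; lra | nra | apply pow2_ge_0 |].
  rewrite pow2_sqrt by lra. apply gsub_sq_le; assumption.
Qed.

Lemma lower_poly_bound (a y : R) : 0 < a < 1 -> 0 <= y <= 1 ->
  lower_poly a y <= gsub a y / sqrt (zsub a y).
Proof.
  intros Ha Hy.
  pose proof (zsub_pos a y Ha (proj1 Hy)) as Hz.
  assert (Hs : 0 < sqrt 2) by (apply sqrt_lt_R0; lra).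
  assert (Hr : 0 <= alpha a - beta a * y).
  { unfold alpha, beta. pose proof (pow2_ge_0 (1 - a)). nra. }
  replace (lower_poly a y) with
    (gsub a y * ((alpha a - beta a * y) / sqrt 2)
     * (3 - sqrt (zsub a y) ^ 2 * ((alpha a - beta a * y) / sqrt 2) ^ 2) / 2).
  2: { unfold lower_poly. rewrite pow2_sqrt by lra.
       unfold Rdiv at 3. rewrite Rpow_mult_distr, pow_inv, pow2_sqrt by lra. field. lra. }
  apply tangent_div_bound; [apply sqrt_lt_R0; lra | | unfold gsub; nra].
  apply Rdiv_le_0_compat; lra.
Qed.

Definition upper_moment (a : R) : R :=
  a ^ 2 + a * (1 - a) + 3 / 8 * (1 - a) ^ 2
  + 2 * nu a ^ 2 * ((1 - a) / 2 + a / 4 + a ^ 2 / (2 * (1 + a))).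
Definition lower_moment (a : R) : R :=
  let t := 1 - a in let al := alpha a in let be := beta a in
  (3 * a * al - a ^ 2 * al ^ 3)
  + 1 / 2 * (3 * t * al - 3 * a * be - 3 / 2 * a * t * al ^ 3 + 3 * a ^ 2 * al ^ 2 * be)
  + 3 / 8 * (- 3 * t * be - 1 / 2 * t ^ 2 * al ^ 3 + 9 / 2 * a * t * al ^ 2 * be
             - 3 * a ^ 2 * al * be ^ 2)
  + 5 / 16 * (3 / 2 * t ^ 2 * al ^ 2 * be - 9 / 2 * a * t * al * be ^ 2 + a ^ 2 * be ^ 3)
  + 35 / 128 * (- 3 / 2 * t ^ 2 * al * be ^ 2 + 3 / 2 * a * t * be ^ 3)
  + 63 / 256 * (1 / 2 * t ^ 2 * be ^ 3).

Lemma is_RInt_upper_poly (a : R) : 0 < a < 1 ->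
  is_RInt (fun x => upper_poly a (cos x ^ 2)) (-(PI / 2)) (PI / 2)
    (PI * upper_moment a / (2 * sqrt 2 * nu a)).
Proof.
  intros Ha. assert (Hnu : 0 < nu a) by (unfold nu; lra).
  assert (Hs : 0 < sqrt 2) by (apply sqrt_lt_R0; lra).
  set (D := 2 * sqrt 2 * nu a).
  set (l := [(a ^ 2 + nu a ^ 2 * a) / D;
             (2 * a * (1 - a) + 2 * nu a ^ 2 * ((1 - a) - a / 2 + a ^ 2 / (1 + a))) / D;
             (1 - a) ^ 2 / D]).
  replace (PI * upper_moment a / D) with (PI * poly_moment l 0)
    by (unfold l, poly_moment, upper_moment, D; simpl; field; repeat split; lra).
  apply (is_RInt_ext_R (fun x => poly_eval l 0 (cos x ^ 2))); [| apply is_RInt_poly_cos2].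
  intros x. unfold l, poly_eval, upper_poly, chord, gsub, D. field. split; lra.
Qed.

Lemma is_RInt_lower_poly (a : R) : 0 < a < 1 ->
  is_RInt (fun x => lower_poly a (cos x ^ 2)) (-(PI / 2)) (PI / 2)
    (PI * lower_moment a / (2 * sqrt 2)).
Proof.
  intros Ha. assert (Hs : 0 < sqrt 2) by (apply sqrt_lt_R0; lra).
  set (D := 2 * sqrt 2). set (al := alpha a). set (be := beta a). set (t := 1 - a).
  set (l := [(3 * a * al - a ^ 2 * al ^ 3) / D;
             (3 * t * al - 3 * a * be - 3 / 2 * a * t * al ^ 3 + 3 * a ^ 2 * al ^ 2 * be) / D;
             (- 3 * t * be - 1 / 2 * t ^ 2 * al ^ 3 + 9 / 2 * a * t * al ^ 2 * be
              - 3 * a ^ 2 * al * be ^ 2) / D;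
             (3 / 2 * t ^ 2 * al ^ 2 * be - 9 / 2 * a * t * al * be ^ 2 + a ^ 2 * be ^ 3) / D;
             (- 3 / 2 * t ^ 2 * al * be ^ 2 + 3 / 2 * a * t * be ^ 3) / D;
             (1 / 2 * t ^ 2 * be ^ 3) / D]).
  replace (PI * lower_moment a / D) with (PI * poly_moment l 0)
    by (unfold l, poly_moment, lower_moment, D; fold al be t; simpl; field; lra).
  apply (is_RInt_ext_R (fun x => poly_eval l 0 (cos x ^ 2))); [| apply is_RInt_poly_cos2].
  intros x. unfold l, poly_eval, lower_poly, gsub, zsub, D. fold al be t. field. lra.
Qed.

Lemma I1_upper (a : R) : 0 < a < 1 ->
  RInt (reduced a 2) (-(PI / 2)) (PI / 2) <= PI * upper_moment a / (2 * sqrt 2 * nu a).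
Proof.
  intros Ha. rewrite <- (is_RInt_unique _ _ _ _ (is_RInt_upper_poly a Ha)).
  pose proof PI_RGT_0.
  apply RInt_le; [lra | apply reduced_ex_RInt, Ha | eexists; apply is_RInt_upper_poly, Ha |].
  intros x _. apply upper_poly_bound; [exact Ha | apply cos2_bounds].
Qed.

Lemma I2_lower (a : R) : 0 < a < 1 ->
  PI * lower_moment a / (2 * sqrt 2) <= RInt (reduced a 1) (-(PI / 2)) (PI / 2).
Proof.
  intros Ha. rewrite <- (is_RInt_unique _ _ _ _ (is_RInt_lower_poly a Ha)).
  pose proof PI_RGT_0.
  apply RInt_le; [lra | eexists; apply is_RInt_lower_poly, Ha | apply reduced_ex_RInt, Ha |].
  intros x _. unfold reduced. rewrite pow_1.
  apply lower_poly_bound; [exact Ha | apply cos2_bounds].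
Qed.

(** * The polynomial inequality in [a] *)

Fixpoint bernstein (l : list R) (k n : nat) (a : R) : R :=
  match l with
  | nil => 0
  | c :: l' => c * a ^ k * (1 - a) ^ (n - k) + bernstein l' (S k) n a
  end.

Lemma bernstein_pos (l : list R) (k n : nat) (a : R) :
  0 < a < 1 -> List.Forall (fun c => 0 < c) l -> l <> nil -> 0 < bernstein l k n a.
Proof.
  intros Ha Hl; revert k; induction Hl as [| c l' Hc Hl' IH]; intros k Hne; [congruence |].
  simpl. assert (0 < c * a ^ k * (1 - a) ^ (n - k)).
  { apply Rmult_lt_0_compat; [apply Rmult_lt_0_compat |]; [lra | apply pow_lt; lra ..]. }
  destruct l' as [| c' l''].
  - simpl. lra.
  - specialize (IH (S k) ltac:(discriminate)). lra.
Qed.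

(** Degree-25 Bernstein coefficients of
    [(1 + a) (nu a * lower_moment a ^ 3 - 4 upper_moment a) / (1 - a)]. *)
Definition certificate : list R :=
  [(9159838761/40000000000); (434453281067/40000000000); (1384769468259/8000000000);
   (12269357007083/8000000000); (7329953075243/800000000); (20446334982511/500000000);
   (56606114422/390625); (2117167818959/5000000); (834826484477481/800000000);
   (1755622959997203/800000000); (632739934955359/160000000);
   (976631983978791/160000000); (643737272932747/80000000); (180502373163307/20000000);
   (68607314040563/8000000); (439857434819/64000); (59153432907337/12800000);
   (33166209798699/12800000); (3076836192123/2560000); (46753433147/102400);
   (35886627831/256000); (2186795167/64000); (20606687/3200); (717367/800); (8377/100);
   4].

Lemma moments_inequality (a : R) : 0 < a < 1 ->
  4 * upper_moment a < nu a * lower_moment a ^ 3.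
Proof.
  intros Ha.
  assert (E : (1 + a) * (nu a * lower_moment a ^ 3 - 4 * upper_moment a)
              = (1 - a) * bernstein certificate 0 25 a).
  { unfold lower_moment, upper_moment, nu, alpha, beta, certificate.
    cbn [bernstein Nat.sub]. field. lra. }
  assert (0 < bernstein certificate 0 25 a).
  { apply bernstein_pos; [lra | | discriminate]. unfold certificate. repeat constructor; lra. }
  assert (0 < (1 + a) * (nu a * lower_moment a ^ 3 - 4 * upper_moment a))
    by (rewrite E; apply Rmult_lt_0_compat; lra).
  apply Rminus_lt_0. apply (Rmult_lt_reg_l (1 + a)); lra.
Qed.

Lemma ratio_bound (I1 I2 U L : R) :
  I1 <= U -> 0 < L <= I2 -> PI ^ 2 * U < 2 * L ^ 3 -> PI ^ 2 * (I1 / I2 ^ 3) < 2.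
Proof.
  intros H1 H2 HUL.
  assert (HL3 : L ^ 3 <= I2 ^ 3) by (apply pow_incr; lra).
  assert (HI2 : 0 < I2 ^ 3) by (apply pow_lt; lra).
  assert (PI ^ 2 * I1 <= PI ^ 2 * U) by (apply Rmult_le_compat_l; [apply pow2_ge_0 | lra]).
  apply (Rmult_lt_reg_r (I2 ^ 3)); [exact HI2 |].
  replace (PI ^ 2 * (I1 / I2 ^ 3) * I2 ^ 3) with (PI ^ 2 * I1) by (field; lra).
  lra.
Qed.

(** The theorem for the transformed integrals: with
    [U = pi upper_moment / (2 sqrt 2 nu)] and [L = pi lower_moment / (2 sqrt 2)],
    [pi^2 U < 2 L^3] is exactly [4 upper_moment < nu lower_moment^3]. *)
Lemma reduced_ratio_lt_2 (a : R) : 0 < a < 1 ->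
  PI ^ 2 * (RInt (reduced a 2) (-(PI / 2)) (PI / 2)
            / RInt (reduced a 1) (-(PI / 2)) (PI / 2) ^ 3) < 2.
Proof.
  intros Ha.
  pose proof (moments_inequality a Ha) as Hmom. pose proof PI_RGT_0.
  assert (Hnu : 0 < nu a) by (unfold nu; lra).
  assert (Hs : 0 < sqrt 2) by (apply sqrt_lt_R0; lra).
  assert (HU : 0 < upper_moment a).
  { unfold upper_moment. assert (0 < a ^ 2 / (2 * (1 + a))) by (apply Rdiv_lt_0_compat; nra).
    nra. }
  assert (HL : 0 < lower_moment a).
  { destruct (Rle_or_lt (lower_moment a) 0) as [Hle |]; [| easy].
    assert (lower_moment a ^ 3 <= 0)
      by (replace (lower_moment a ^ 3) with (lower_moment a * lower_moment a ^ 2) by ring;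
          pose proof (pow2_ge_0 (lower_moment a)); nra).
    nra. }
  apply (ratio_bound _ _ _ (PI * lower_moment a / (2 * sqrt 2)) (I1_upper a Ha)).
  - split; [apply Rdiv_lt_0_compat; nra | apply I2_lower, Ha].
  - replace (2 * (PI * lower_moment a / (2 * sqrt 2)) ^ 3)
      with (PI ^ 3 * (nu a * lower_moment a ^ 3) / (8 * sqrt 2 * nu a)).
    2: { replace ((PI * lower_moment a / (2 * sqrt 2)) ^ 3)
           with (PI ^ 3 * lower_moment a ^ 3 / (8 * (sqrt 2 ^ 2 * sqrt 2))) by (field; lra).
         rewrite pow2_sqrt by lra. field. lra. }
    replace (PI ^ 2 * (PI * upper_moment a / (2 * sqrt 2 * nu a)))
      with (PI ^ 3 * (4 * upper_moment a) / (8 * sqrt 2 * nu a)) by (field; lra).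
    apply Rmult_lt_compat_r; [apply Rinv_0_lt_compat; nra |].
    apply Rmult_lt_compat_l; [apply pow_lt; lra | exact Hmom].
Qed.

Theorem proposition14 (b : R) (hb : 0 < b < PI / 2) :
  exists I1 I2 : R,
    improper_integral (integrand1 b) (- b) b I1 /\
    improper_integral (integrand2 b) (- b) b I2 /\
    PI ^ 2 * (I1 / I2 ^ 3) < 2.
Proof.
  exists (RInt (reduced (cos b ^ 2) 2) (-(PI / 2)) (PI / 2)),
         (RInt (reduced (cos b ^ 2) 1) (-(PI / 2)) (PI / 2)).
  split; [| split].
  - exact (improper_integral_odd_power b hb 2).
  - exact (improper_integral_odd_power b hb 1).
  - exact (reduced_ratio_lt_2 _ (cos2_b_range b hb)).
Qed.
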